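(* Let $\gamma(s)$ be an arc-length parametrized triharmonic Frenet helix immersed in a BCV space $M(a,b)$ with $4a\neq b^2$. If the torsion of $\gamma$ is not zero, then $\gamma$ is a geodesic of a suitable Hopf cylinder.
   Context: For real $a,b$, the BCV space $M(a,b)$ is $\{(x,y,z)\in\mathbb{R}^3:\lambda_a=1+a(x^2+y^2)>0\}$ with the metric $$g_{a,b}=\frac{dx^2+dy^2}{[1+a(x^2+y^2)]^2}+\left(dz+\frac{b}{2}\,\frac{y\,dx-x\,dy}{1+a(x^2+y^2)}\right)^2.$$ The vector field $E_3=\partial_z$ is a Killing field whose flow is $\psi_t(x,y,z)=(x,y,z+t)$. A Hopf cylinder is a surface invariant under this flow, parametrized as $\mathbf{x}(s,t)=\psi_t(\widetilde\alpha(s))$ with $\widetilde\alpha$ an arc-length parametrized curve orthogonal to $E_3$. An arc-length parametrized curve $\gamma$ with $T=\gamma'$ is triharmonic if $\nabla_T^5T+R(\nabla_T^3T,T)T-R(\nabla_T^2T,\nabla_TT)T=0$, where $\nabla$ is the Levi-Civita connection and $R(X,Y)=\nabla_X\nabla_Y-\nabla_Y\nabla_X-\nabla_{[X,Y]}$. A Frenet helix is a non-geodesic curve with constant curvature $\kappa$ and constant torsion $\tau$, defined by $\nabla_TT=\kappa N$, $\nabla_TN=-\kappa T+\tau B$, $\nabla_TB=-\tau N$. *)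

From Stdlib Require Import Reals Arith.
From Coquelicot Require Import Coquelicot.
Open Scope R_scope.

(* Points / tangent vectors in coordinates: index 0 = x, 1 = y, 2 = z
   (only indices 0,1,2 are used). Tangent vectors are expressed in the
   coordinate basis (d/dx, d/dy, d/dz). *)
Definition vec := nat -> R.

Definition sum3 (f : nat -> R) : R := f 0%nat + f 1%nat + f 2%nat.

Definition lam (a : R) (p : vec) : R := 1 + a * (p 0%nat ^ 2 + p 1%nat ^ 2).

Definition inM (a : R) (p : vec) : Prop := 0 < lam a p.

(* the 1-form theta = dz + (b/2) (y dx - x dy)/lambda_a, componentwise *)
Definition theta (a b : R) (p : vec) (i : nat) : R :=
  match i with
  | 0%nat => b / 2 * p 1%nat / lam a p
  | 1%nat => - (b / 2 * p 0%nat / lam a p)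
  | _ => 1
  end.

Definition kdelta2 (i j : nat) : R :=
  if (Nat.eqb i j && Nat.ltb i 2)%bool then 1 else 0.

Definition gmet (a b : R) (p : vec) (i j : nat) : R :=
  kdelta2 i j / (lam a p) ^ 2 + theta a b p i * theta a b p j.

Definition cof3 (m : nat -> nat -> R) (i j : nat) : R :=
  m ((i+1) mod 3)%nat ((j+1) mod 3)%nat * m ((i+2) mod 3)%nat ((j+2) mod 3)%nat
  - m ((i+1) mod 3)%nat ((j+2) mod 3)%nat * m ((i+2) mod 3)%nat ((j+1) mod 3)%nat.
Definition det3 (m : nat -> nat -> R) : R := sum3 (fun j => m 0%nat j * cof3 m 0%nat j).
Definition ginv (a b : R) (p : vec) (i j : nat) : R :=
  cof3 (gmet a b p) j i / det3 (gmet a b p).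

Definition upd (p : vec) (i : nat) (h : R) : vec :=
  fun k => if Nat.eqb k i then h else p k.
Definition pd (i : nat) (f : vec -> R) (p : vec) : R :=
  Derive (fun h => f (upd p i h)) (p i).

Definition Gam (a b : R) (l i j : nat) (p : vec) : R :=
  / 2 * sum3 (fun m => ginv a b p l m *
     (pd i (fun q => gmet a b q m j) p + pd j (fun q => gmet a b q m i) p
      - pd m (fun q => gmet a b q i j) p)).

(* R(d_i,d_j) d_k = Rm l i j k d_l,  with R(X,Y) = [nabla_X,nabla_Y] - nabla_[X,Y] *)
Definition Rm (a b : R) (l i j k : nat) (p : vec) : R :=
  pd i (Gam a b l j k) p - pd j (Gam a b l i k) p
  + sum3 (fun m => Gam a b l i m p * Gam a b m j k p)
  - sum3 (fun m => Gam a b l j m p * Gam a b m i k p).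

Definition Rcurv (a b : R) (p : vec) (X Y Z : vec) : vec :=
  fun l => sum3 (fun i => sum3 (fun j => sum3 (fun k =>
             X i * Y j * Z k * Rm a b l i j k p))).

Definition ginner (a b : R) (p : vec) (X Y : vec) : R :=
  sum3 (fun i => sum3 (fun j => gmet a b p i j * X i * Y j)).

Definition vel (c : R -> vec) (s : R) : vec := fun i => Derive (fun t => c t i) s.

Definition covd (a b : R) (c : R -> vec) (V : R -> vec) (s : R) : vec :=
  fun l => Derive (fun t => V t l) s
           + sum3 (fun i => sum3 (fun j => Gam a b l i j (c s) * vel c s i * V s j)).

Fixpoint covT (a b : R) (c : R -> vec) (n : nat) : R -> vec :=
  match n with
  | O => vel c
  | S n' => covd a b c (covT a b c n')
  end.

Definition inI (lo hi : Rbar) (s : R) : Prop := Rbar_lt lo s /\ Rbar_lt s hi.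

Definition smooth_on (P : R -> Prop) (f : R -> R) : Prop :=
  forall (n : nat) (s : R), P s -> ex_derive (Derive_n f n) s.

Definition curve_in_M (a : R) (lo hi : Rbar) (c : R -> vec) : Prop :=
  Rbar_lt lo hi /\
  (forall i, (i < 3)%nat -> smooth_on (inI lo hi) (fun t => c t i)) /\
  (forall s, inI lo hi s -> inM a (c s)).

Definition arclength (a b : R) (lo hi : Rbar) (c : R -> vec) : Prop :=
  forall s, inI lo hi s -> ginner a b (c s) (vel c s) (vel c s) = 1.

Definition triharmonic (a b : R) (lo hi : Rbar) (c : R -> vec) : Prop :=
  forall s, inI lo hi s -> forall l, (l < 3)%nat ->
    covT a b c 5 s l
    + Rcurv a b (c s) (covT a b c 3 s) (vel c s) (vel c s) l
    - Rcurv a b (c s) (covT a b c 2 s) (covT a b c 1 s) (vel c s) l = 0.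

Definition frenet_helix (a b : R) (lo hi : Rbar) (c : R -> vec) (kappa tau : R) : Prop :=
  0 < kappa /\
  exists N B : R -> vec,
    (forall i, (i < 3)%nat -> forall s, inI lo hi s ->
        ex_derive (fun t => N t i) s /\ ex_derive (fun t => B t i) s) /\
    (forall s, inI lo hi s ->
       let T := vel c s in
       ginner a b (c s) T T = 1 /\ ginner a b (c s) (N s) (N s) = 1 /\
       ginner a b (c s) (B s) (B s) = 1 /\ ginner a b (c s) T (N s) = 0 /\
       ginner a b (c s) T (B s) = 0 /\ ginner a b (c s) (N s) (B s) = 0 /\
       (forall l, (l < 3)%nat ->
          covT a b c 1 s l = kappa * N s l /\
          covd a b c N s l = - kappa * T l + tau * B s l /\
          covd a b c B s l = - tau * N s l)).

Definition E3 : vec := fun i => if Nat.eqb i 2 then 1 else 0.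

Definition psi (t : R) (p : vec) : vec := fun i => if Nat.eqb i 2 then p i + t else p i.

(* c is a geodesic of the Hopf cylinder x(u,t) = psi_t(alpha(u)), where alpha is an
   arc-length parametrized smooth curve in M(a,b) on (lo', hi') orthogonal to E3:
   c lies on the cylinder, c(s) = psi_{t(s)}(alpha(sigma(s))) with sigma, t
   differentiable, and the acceleration nabla_T T of c is orthogonal to the tangent
   plane of the cylinder, spanned by x_u = d psi_t(alpha') (same coordinate
   components as alpha', since psi_t is a translation) and x_t = E3. *)
Definition geodesic_of_hopf_cylinder (a b : R) (lo hi : Rbar) (c : R -> vec) : Prop :=
  exists (lo' hi' : Rbar) (alpha : R -> vec) (sigma tt : R -> R),
    curve_in_M a lo' hi' alpha /\
    arclength a b lo' hi' alpha /\
    (forall u, inI lo' hi' u -> ginner a b (alpha u) (vel alpha u) E3 = 0) /\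
    (forall s, inI lo hi s ->
       inI lo' hi' (sigma s) /\ ex_derive sigma s /\ ex_derive tt s /\
       (forall i, (i < 3)%nat -> c s i = psi (tt s) (alpha (sigma s)) i) /\
       ginner a b (c s) (covT a b c 1 s) (vel alpha (sigma s)) = 0 /\
       ginner a b (c s) (covT a b c 1 s) E3 = 0).

(* Write [eta = g(., E3)] and [nu = eta T] for the Frenet frame [T, N, B].  Along a helix
   every [nabla_T^n T] is an explicit combination of [T, N, B], and the BCV curvature tensor
   is a polynomial in [g] and [eta]; so the triharmonic equation, paired with [B] and [N],
   becomes two algebraic relations between [nu], [eta N], [eta B].  Since [E3] is Killing,
   [d/ds eta(V) = eta(nabla_T V) + g(nabla_T E3, V)].  If [eta N <> 0] somewhere,
   differentiating the first relation and combining it with the second forces [b = 0] and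
   then [kappa = 0]; hence [eta N = 0] everywhere.  Then [nu] is a constant [c] with
   [c^2 < 1] and the acceleration [kappa N] is orthogonal to [T] and [E3], which says that
   the curve is a geodesic of the Hopf cylinder over the curve obtained by flowing it back
   along [E3]. *)

From Stdlib Require Import Reals Lra Lia.
From Coquelicot Require Import Coquelicot.
Open Scope R_scope.

Ltac nonzero H :=
  match goal with
  | |- _ * _ <> 0 => apply Rmult_integral_contrapositive_currified; nonzero H
  | |- _ ^ _ <> 0 => apply pow_nonzero; nonzero H
  | |- _ <> 0 => first [lra | let E := fresh in intro E; apply H; rewrite <- E; ring]
  end.

Ltac side_conditions H := repeat split; try exact I; try assumption; try nonzero H.

(* [sum_k E_k (x) E_k] over the orthonormal frame
   [E_1 = L d_x - (b y / 2) d_z], [E_2 = L d_y + (b x / 2) d_z], [E_3 = d_z]. *)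
Definition ginv_bcv (a b : R) (p : vec) (l m : nat) : R :=
  let x := p 0%nat in let y := p 1%nat in let L := lam a p in
  match l, m with
  | 0, 0 | 1, 1 => L ^ 2
  | 0, 2 | 2, 0 => - (b / 2) * y * L
  | 1, 2 | 2, 1 => b / 2 * x * L
  | 2, 2 => 1 + b ^ 2 / 4 * (x ^ 2 + y ^ 2)
  | _, _ => 0
  end.

Lemma det3_gmet a b p : lam a p <> 0 -> det3 (gmet a b p) = / lam a p ^ 4.
Proof.
intros H. unfold det3, cof3, sum3, gmet, theta, kdelta2; cbn -[lam]. field. side_conditions H.
Qed.

Lemma ginv_eq a b p l m : (l < 3)%nat -> (m < 3)%nat -> lam a p <> 0 ->
  ginv a b p l m = ginv_bcv a b p l m.
Proof.
intros Hl Hm H. unfold ginv. rewrite det3_gmet by exact H.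
destruct l as [|[|[|l]]]; try lia; destruct m as [|[|[|m]]]; try lia;
unfold cof3, gmet, theta, kdelta2, ginv_bcv; cbn -[pow lam]; field; exact H.
Qed.

Definition christoffel (a b : R) (l i j : nat) (p : vec) : R :=
  let x := p 0%nat in let y := p 1%nat in let L := lam a p in
  match l, i, j with
  | 0, 0, 0 => - 2 * a * x / L
  | 0, 0, 1 | 0, 1, 0 => (b ^ 2 / 4 - 2 * a) * y / L
  | 0, 1, 1 => (2 * a - b ^ 2 / 2) * x / L
  | 0, 1, 2 | 0, 2, 1 => b / 2
  | 1, 0, 0 => (2 * a - b ^ 2 / 2) * y / L
  | 1, 0, 1 | 1, 1, 0 => (b ^ 2 / 4 - 2 * a) * x / L
  | 1, 1, 1 => - 2 * a * y / L
  | 1, 0, 2 | 1, 2, 0 => - (b / 2)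
  | 2, 0, 0 => (a - b ^ 2 / 4) * b * x * y / L ^ 2
  | 2, 0, 1 | 2, 1, 0 => (b ^ 2 / 4 - a) * (b / 2) * (x ^ 2 - y ^ 2) / L ^ 2
  | 2, 1, 1 => (b ^ 2 / 4 - a) * b * x * y / L ^ 2
  | 2, 0, 2 | 2, 2, 0 => - (b ^ 2 / 4) * x / L
  | 2, 1, 2 | 2, 2, 1 => - (b ^ 2 / 4) * y / L
  | _, _, _ => 0
  end.

Lemma pd_is_derive i f p d : is_derive (fun h => f (upd p i h)) (p i) d -> pd i f p = d.
Proof. apply is_derive_unique. Qed.

Ltac eval_pd H :=
  repeat match goal with
  | |- context [pd ?i ?f ?p] =>
      erewrite (pd_is_derive i f p)
        by (cbn [upd Nat.eqb andb Nat.ltb Nat.leb christoffel gmet theta kdelta2 lam];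
            auto_derive; [side_conditions H | reflexivity])
  end.

Lemma Gam_christoffel a b p l i j : (l < 3)%nat -> (i < 3)%nat -> (j < 3)%nat ->
  lam a p <> 0 -> Gam a b l i j p = christoffel a b l i j p.
Proof.
intros Hl Hi Hj H. unfold Gam, sum3.
rewrite !ginv_eq by (first [lia | exact H]).
unfold lam in H.
destruct l as [|[|[|l]]]; try lia; destruct i as [|[|[|i]]]; try lia;
destruct j as [|[|[|j]]]; try lia;
unfold gmet, theta, kdelta2, ginv_bcv, christoffel, lam; cbn [Nat.eqb andb Nat.ltb Nat.leb];
eval_pd H; field; side_conditions H.
Qed.

Lemma locally_nonzero (f : R -> R) x : continuous f x -> f x <> 0 -> locally x (fun h => f h <> 0).
Proof. intros Hc Hn. exact (Hc _ (open_neq 0 _ Hn)). Qed.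

Lemma upd_same p m k : upd p m (p m) k = p k.
Proof. unfold upd. destruct (Nat.eqb_spec k m); congruence. Qed.

Lemma lam_upd_locally a p m : lam a p <> 0 -> locally (p m) (fun h => lam a (upd p m h) <> 0).
Proof.
intros H. apply locally_nonzero.
- apply (ex_derive_continuous (V := R_NormedModule)). unfold lam, upd.
  destruct (Nat.eqb 0 m), (Nat.eqb 1 m); auto_derive; exact I.
- unfold lam in *. rewrite !upd_same. exact H.
Qed.

Lemma pd_Gam a b p m l i j : (l < 3)%nat -> (i < 3)%nat -> (j < 3)%nat -> lam a p <> 0 ->
  pd m (Gam a b l i j) p = pd m (christoffel a b l i j) p.
Proof.
intros Hl Hi Hj H. apply Derive_ext_loc.
apply (filter_imp _ _ (fun h Hh => Gam_christoffel a b _ l i j Hl Hi Hj Hh)).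
exact (lam_upd_locally a p m H).
Qed.

(* With [4 a = kappa0] and [b / 2 = tau0] these are the constants [kappa0 - 3 tau0^2] and
   [kappa0 - 4 tau0^2] of the BCV curvature tensor. *)
Definition cA (a b : R) := 4 * a - 3 / 4 * b ^ 2.
Definition cB (a b : R) := 4 * a - b ^ 2.

Definition curvature_coord (a b : R) (p : vec) (i j k m : nat) : R :=
  let g := gmet a b p in
  cA a b * (g j k * g i m - g i k * g j m)
  - cB a b * (g j 2%nat * g k 2%nat * g i m - g i 2%nat * g k 2%nat * g j m
              + g i 2%nat * g j k * g m 2%nat - g j 2%nat * g i k * g m 2%nat).

Lemma Rm_antisym a b l i j k p : Rm a b l j i k p = - Rm a b l i j k p.
Proof. unfold Rm. ring. Qed.

Lemma Rm_lower_lt a b p i j k m : (i < j < 3)%nat -> (k < 3)%nat -> (m < 3)%nat ->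
  lam a p <> 0 ->
  sum3 (fun l => gmet a b p l m * Rm a b l i j k p) = curvature_coord a b p i j k m.
Proof.
intros Hij Hk Hm H. unfold sum3, Rm, sum3.
rewrite !pd_Gam, !Gam_christoffel by (first [lia | exact H]).
unfold lam in H.
destruct i as [|[|i]]; destruct j as [|[|[|j]]]; try lia;
destruct k as [|[|[|k]]]; try lia; destruct m as [|[|[|m]]]; try lia;
unfold curvature_coord, cA, cB, christoffel, gmet, theta, kdelta2, lam;
cbn [Nat.eqb andb Nat.ltb Nat.leb];
eval_pd H; field; side_conditions H.
Qed.

Lemma Rm_lower a b p i j k m : (i < 3)%nat -> (j < 3)%nat -> (k < 3)%nat -> (m < 3)%nat ->
  lam a p <> 0 ->
  sum3 (fun l => gmet a b p l m * Rm a b l i j k p) = curvature_coord a b p i j k m.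
Proof.
intros Hi Hj Hk Hm H. unfold curvature_coord.
destruct (Nat.lt_trichotomy i j) as [Hij | [<- | Hij]].
- apply Rm_lower_lt; auto.
- assert (Hdiag : forall l, Rm a b l i i k p = 0) by (intros l; unfold Rm; ring).
  unfold sum3. rewrite !Hdiag. ring.
- transitivity (- sum3 (fun l => gmet a b p l m * Rm a b l j i k p)).
  + unfold sum3. rewrite !(Rm_antisym a b _ j i). ring.
  + rewrite Rm_lower_lt by auto. unfold curvature_coord. ring.
Qed.

Definition eta (a b : R) (p X : vec) : R := ginner a b p X E3.

Lemma eta_theta a b p X :
  eta a b p X = theta a b p 0%nat * X 0%nat + theta a b p 1%nat * X 1%nat + X 2%nat.
Proof.
unfold eta, ginner, sum3, E3, gmet, kdelta2; cbn [Nat.eqb andb Nat.ltb Nat.leb theta].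
unfold Rdiv. ring.
Qed.

Definition bcv_curvature (a b : R) (p X Y Z W : vec) : R :=
  let g := ginner a b p in let e := eta a b p in
  cA a b * (g Y Z * g X W - g X Z * g Y W)
  - cB a b * (e Y * e Z * g X W - e X * e Z * g Y W + e X * g Y Z * e W - e Y * g X Z * e W).

Lemma sum3_ext (f h : nat -> R) : (forall i, (i < 3)%nat -> f i = h i) -> sum3 f = sum3 h.
Proof. intros H. unfold sum3. rewrite !H by lia. reflexivity. Qed.

Lemma ginner_Rcurv a b p X Y Z W : lam a p <> 0 ->
  ginner a b p (Rcurv a b p X Y Z) W = bcv_curvature a b p X Y Z W.
Proof.
intros H.
transitivity (sum3 (fun i => sum3 (fun j => sum3 (fun k => sum3 (fun m =>
   X i * Y j * Z k * W m * sum3 (fun l => gmet a b p l m * Rm a b l i j k p)))))).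
{ unfold ginner, Rcurv, sum3. ring. }
transitivity (sum3 (fun i => sum3 (fun j => sum3 (fun k => sum3 (fun m =>
   X i * Y j * Z k * W m * curvature_coord a b p i j k m))))).
{ do 4 (apply sum3_ext; intros ? ?). rewrite Rm_lower by assumption. reflexivity. }
unfold bcv_curvature, curvature_coord, eta, ginner, E3, sum3; cbn [Nat.eqb]. ring.
Qed.

Definition eq3 (X Y : vec) : Prop := forall l, (l < 3)%nat -> X l = Y l.
Definition vlin (c : R) (X : vec) (d : R) (Y : vec) : vec := fun l => c * X l + d * Y l.

Lemma eq3_refl X : eq3 X X.
Proof. intros l _; reflexivity. Qed.

Lemma ginner_ext a b p X X' Y Y' :
  eq3 X X' -> eq3 Y Y' -> ginner a b p X Y = ginner a b p X' Y'.
Proof. intros H1 H2. unfold ginner, sum3. rewrite !H1, !H2 by lia. reflexivity. Qed.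

Lemma ginner_sym a b p X Y : ginner a b p X Y = ginner a b p Y X.
Proof. unfold ginner, sum3, gmet, kdelta2; cbn [Nat.eqb andb Nat.ltb Nat.leb]. ring. Qed.

Lemma ginner_vlin_l a b p c X d Y W :
  ginner a b p (vlin c X d Y) W = c * ginner a b p X W + d * ginner a b p Y W.
Proof. unfold ginner, vlin, sum3. ring. Qed.

Lemma ginner_vlin_r a b p c X d Y W :
  ginner a b p W (vlin c X d Y) = c * ginner a b p W X + d * ginner a b p W Y.
Proof. unfold ginner, vlin, sum3. ring. Qed.

Definition dot3 (u v : vec) : R := sum3 (fun i => u i * v i).

Definition cross (u v : vec) : vec :=
  fun i => match i with
           | 0%nat => u 1%nat * v 2%nat - u 2%nat * v 1%nat
           | 1%nat => u 2%nat * v 0%nat - u 0%nat * v 2%nat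
           | _ => u 0%nat * v 1%nat - u 1%nat * v 0%nat
           end.

Lemma orthonormal_vertical (u v w : vec) :
  dot3 u u = 1 -> dot3 v v = 1 -> dot3 w w = 1 ->
  dot3 u v = 0 -> dot3 u w = 0 -> dot3 v w = 0 ->
  u 2%nat ^ 2 + v 2%nat ^ 2 + w 2%nat ^ 2 = 1 /\
  cross u w 2%nat ^ 2 = v 2%nat ^ 2 /\ cross u v 2%nat ^ 2 = w 2%nat ^ 2.
Proof.
intros Huu Hvv Hww Huv Huw Hvw.
set (d := dot3 u (cross v w)).
assert (Hd : d ^ 2 = 1).
{ assert (Gram : d ^ 2 = dot3 u u * (dot3 v v * dot3 w w - dot3 v w ^ 2)
    - dot3 u v * (dot3 u v * dot3 w w - dot3 v w * dot3 u w)
    + dot3 u w * (dot3 u v * dot3 v w - dot3 v v * dot3 u w))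
    by (unfold d, dot3, cross, sum3; ring).
  rewrite Gram, Huu, Hvv, Hww, Huv, Huw, Hvw. ring. }
assert (Cramer : forall c, d * c 2%nat = dot3 c u * cross v w 2%nat
    + dot3 c v * cross w u 2%nat + dot3 c w * cross u v 2%nat)
  by (intros c; unfold d, dot3, cross, sum3; ring).
assert (Hdot : forall x y, dot3 x y = dot3 y x) by (intros; unfold dot3, sum3; ring).
assert (Cu := Cramer u). assert (Cv := Cramer v). assert (Cw := Cramer w).
rewrite Huu, Huv, Huw in Cu.
rewrite Hvv, (Hdot v u), Huv, Hvw in Cv.
rewrite Hww, (Hdot w u), (Hdot w v), Huw, Hvw in Cw.
assert (Hcwu : cross u w 2%nat = - cross w u 2%nat) by (unfold cross; ring).
assert (Hdet :
  u 2%nat * cross v w 2%nat + v 2%nat * cross w u 2%nat + w 2%nat * cross u v 2%nat = d)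
  by (unfold d, dot3, cross, sum3; ring).
split; [|split].
- apply (Rmult_eq_reg_l d); [|intros E; rewrite E in Hd; lra].
  transitivity (u 2%nat * (d * u 2%nat) + v 2%nat * (d * v 2%nat) + w 2%nat * (d * w 2%nat));
    [ring|].
  rewrite Cu, Cv, Cw, <- Hdet. ring.
- assert (Ev : cross w u 2%nat = d * v 2%nat) by (rewrite Cv; ring).
  rewrite Hcwu, Ev. transitivity (d ^ 2 * v 2%nat ^ 2); [ring | rewrite Hd; ring].
- assert (Ew : cross u v 2%nat = d * w 2%nat) by (rewrite Cw; ring).
  rewrite Ew. transitivity (d ^ 2 * w 2%nat ^ 2); [ring | rewrite Hd; ring].
Qed.

(* Coordinates in the coframe dual to the frame of [ginv_bcv]. *)
Definition coframe (a b : R) (p X : vec) : vec :=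
  fun i => match i with
           | 0%nat => X 0%nat / lam a p
           | 1%nat => X 1%nat / lam a p
           | _ => eta a b p X
           end.

Lemma ginner_coframe a b p X Y : lam a p <> 0 ->
  ginner a b p X Y = dot3 (coframe a b p X) (coframe a b p Y).
Proof.
intros H. unfold dot3, sum3, coframe. rewrite !eta_theta.
unfold ginner, sum3, gmet, kdelta2; cbn [Nat.eqb andb Nat.ltb Nat.leb theta]. field. exact H.
Qed.

(* [g(nabla_X E3, Y)]: [nabla_X E3] is the horizontal part of [X] turned by a right angle
   and scaled by [b / 2]. *)
Definition eta_twist (a b : R) (p X Y : vec) : R :=
  - (b / 2) * cross (coframe a b p X) (coframe a b p Y) 2%nat.

Lemma eta_twist_self a b p X : eta_twist a b p X X = 0.
Proof. unfold eta_twist, cross. ring. Qed.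

Lemma eta_deriv a b (c V : R -> vec) s :
  lam a (c s) <> 0 ->
  ex_derive (fun t => c t 0%nat) s -> ex_derive (fun t => c t 1%nat) s ->
  (forall l, (l < 3)%nat -> ex_derive (fun t => V t l) s) ->
  is_derive (fun t => eta a b (c t) (V t)) s
    (eta a b (c s) (covd a b c V s) + eta_twist a b (c s) (vel c s) (V s)).
Proof.
intros H Hc0 Hc1 HV.
set (x := fun t => c t 0%nat). set (y := fun t => c t 1%nat).
set (v0 := fun t => V t 0%nat). set (v1 := fun t => V t 1%nat). set (v2 := fun t => V t 2%nat).
assert (Hv0 : ex_derive v0 s) by (apply HV; lia).
assert (Hv1 : ex_derive v1 s) by (apply HV; lia).
assert (Hv2 : ex_derive v2 s) by (apply HV; lia).
apply (is_derive_ext (fun t => b / 2 * y t / (1 + a * (x t ^ 2 + y t ^ 2)) * v0 t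
  + - (b / 2 * x t / (1 + a * (x t ^ 2 + y t ^ 2))) * v1 t + v2 t)).
{ intros t. rewrite eta_theta. reflexivity. }
unfold lam in H. fold (x s) (y s) in H.
auto_derive; [side_conditions H|].
rewrite !eta_theta. unfold eta_twist, cross, coframe.
unfold covd, vel, sum3. rewrite !Gam_christoffel by (first [lia | exact H]).
unfold christoffel, theta, lam; cbv beta iota zeta. unfold x, y, v0, v1, v2 in *.
field. side_conditions H.
Qed.

Lemma covd_vlin a b c (V X Y : R -> vec) al be s :
  locally s (fun t => eq3 (V t) (vlin al (X t) be (Y t))) ->
  (forall l, (l < 3)%nat -> ex_derive (fun t => X t l) s) ->
  (forall l, (l < 3)%nat -> ex_derive (fun t => Y t l) s) ->
  eq3 (covd a b c V s) (vlin al (covd a b c X s) be (covd a b c Y s)).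
Proof.
intros HV HX HY l Hl. unfold covd, vlin.
rewrite (Derive_ext_loc _ (fun t => al * X t l + be * Y t l)).
2:{ apply (filter_imp _ _ (fun t Ht => Ht l Hl) HV). }
rewrite Derive_plus, !Derive_scal by (apply ex_derive_scal; auto).
pose proof (locally_singleton _ _ HV) as Hs. unfold eq3, vlin in Hs.
unfold sum3. rewrite !(Hs 0%nat), !(Hs 1%nat), !(Hs 2%nat) by lia. ring.
Qed.

Lemma inI_locally lo hi s : inI lo hi s -> locally s (inI lo hi).
Proof. apply (open_and _ _ (open_Rbar_gt lo) (open_Rbar_lt hi)). Qed.

Lemma inI_nonempty lo hi : Rbar_lt lo hi -> exists s, inI lo hi s.
Proof.
unfold inI. destruct lo as [l| |], hi as [h| |]; simpl; try tauto; intros H.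
- exists ((l + h) / 2). lra.
- exists (l + 1). lra.
- exists (h - 1). lra.
- exists 0. tauto.
Qed.

Lemma inI_convex lo hi s1 s2 x : inI lo hi s1 -> inI lo hi s2 ->
  Rmin s1 s2 <= x <= Rmax s1 s2 -> inI lo hi x.
Proof.
intros [H1 H2] [H3 H4] [Hx1 Hx2]. split.
- apply (Rbar_lt_le_trans _ (Rmin s1 s2)); [|exact Hx1].
  apply Rmin_case; assumption.
- apply (Rbar_le_lt_trans _ (Rmax s1 s2)); [exact Hx2|].
  apply Rmax_case; assumption.
Qed.

Lemma is_derive_0_const_on lo hi (f : R -> R) :
  (forall s, inI lo hi s -> is_derive f s 0) ->
  forall s1 s2, inI lo hi s1 -> inI lo hi s2 -> f s2 = f s1.
Proof.
intros HD s1 s2 I1 I2.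
destruct (MVT_gen f s1 s2 (fun _ => 0)) as (x & _ & E).
- intros x Hx. apply HD. apply (inI_convex lo hi s1 s2); [exact I1 | exact I2 | lra].
- intros x Hx. apply continuity_pt_filterlim, (ex_derive_continuous (V := R_NormedModule)).
  eexists. apply HD, (inI_convex lo hi s1 s2); assumption.
- lra.
Qed.

Lemma is_derive_0_locally (h : R -> R) x d :
  locally x (fun u => h u = 0) -> is_derive h x d -> d = 0.
Proof.
intros HL HD. apply (is_derive_unique h x d) in HD. rewrite <- HD.
rewrite (Derive_ext_loc h (fun _ => 0) x HL). apply Derive_const.
Qed.

Section CurveInM.

Variables (a : R) (lo hi : Rbar) (g : R -> vec).
Hypothesis Hg : curve_in_M a lo hi g.

Lemma curve_lam_neq0 s : inI lo hi s -> lam a (g s) <> 0.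
Proof. destruct Hg as (_ & _ & HM). intros Hs. specialize (HM s Hs). unfold inM in HM. lra. Qed.

Lemma curve_pos_derivable l s : (l < 3)%nat -> inI lo hi s -> ex_derive (fun t => g t l) s.
Proof. destruct Hg as (_ & Hsm & _). intros Hl Hs. exact (Hsm l Hl 0%nat s Hs). Qed.

Lemma curve_vel_derivable l s : (l < 3)%nat -> inI lo hi s -> ex_derive (fun t => vel g t l) s.
Proof. destruct Hg as (_ & Hsm & _). intros Hl Hs. exact (Hsm l Hl 1%nat s Hs). Qed.

End CurveInM.

Lemma eta_ext a b p X X' : eq3 X X' -> eta a b p X = eta a b p X'.
Proof. intros H. apply ginner_ext; [exact H | apply eq3_refl]. Qed.

Lemma eta_vlin a b p c X d Y : eta a b p (vlin c X d Y) = c * eta a b p X + d * eta a b p Y.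
Proof. apply ginner_vlin_l. Qed.

Lemma bcv_curvature_ext a b p X X' Y Y' Z Z' W :
  eq3 X X' -> eq3 Y Y' -> eq3 Z Z' ->
  bcv_curvature a b p X Y Z W = bcv_curvature a b p X' Y' Z' W.
Proof.
intros HX HY HZ. unfold bcv_curvature.
rewrite (eta_ext _ _ _ _ _ HX), (eta_ext _ _ _ _ _ HY), (eta_ext _ _ _ _ _ HZ).
rewrite !(ginner_ext a b p X X' W W), !(ginner_ext a b p Y Y' Z Z'),
  !(ginner_ext a b p X X' Z Z'), !(ginner_ext a b p Y Y' W W) by (assumption || apply eq3_refl).
reflexivity.
Qed.

(* [A], [C] play [cA a b], [cB a b], and [X] plays [g(nabla_T E3, B)], at a point where
   [eta N <> 0]. *)
Lemma helix_vertical_contradiction (k t A C nu n be X b : R) :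
  0 < k -> A - C = b ^ 2 / 4 -> nu ^ 2 + n ^ 2 + be ^ 2 = 1 -> n <> 0 ->
  (2 * k ^ 2 + t ^ 2) * be + k * t * nu = 0 ->
  (k ^ 2 + t ^ 2) ^ 2 - (2 * k ^ 2 + t ^ 2) * (A - C * (nu ^ 2 + n ^ 2))
    - k * t * C * nu * be = 0 ->
  (2 * k ^ 2 + t ^ 2) * X = t * n * (k ^ 2 + t ^ 2) ->
  X ^ 2 = b ^ 2 / 4 * n ^ 2 -> False.
Proof.
intros Hk HAC Hsum Hn Hbe HN HX HX2.
set (S := k ^ 2 + t ^ 2) in *. set (S' := 2 * k ^ 2 + t ^ 2) in *.
assert (HS : S ^ 2 = S' * (b ^ 2 / 4)).
{ replace (nu ^ 2 + n ^ 2) with (1 - be ^ 2) in HN by lra.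
  replace (k * t * C * nu * be) with (C * be * (k * t * nu)) in HN by ring.
  replace (k * t * nu) with (- (S' * be)) in HN by lra.
  rewrite <- HAC. lra. }
assert (HS' : S' ^ 2 * (b ^ 2 / 4) = t ^ 2 * S ^ 2).
{ apply (Rmult_eq_reg_r (n ^ 2)); [|apply pow_nonzero; exact Hn].
  transitivity ((S' * X) ^ 2); [rewrite Rpow_mult_distr, HX2; ring|].
  rewrite HX. ring. }
rewrite HS in HS'.
assert (Hb : S' * (b ^ 2 / 4) * (2 * k ^ 2) = 0).
{ replace (2 * k ^ 2) with (S' - t ^ 2) by (unfold S'; ring). lra. }
assert (Hb0 : b ^ 2 / 4 = 0).
{ apply Rmult_integral in Hb as [Hb | Hb]; [|exfalso; nra].
  apply Rmult_integral in Hb as [Hb | Hb]; [exfalso; unfold S' in Hb; nra | exact Hb]. }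
rewrite Hb0, Rmult_0_r in HS.
apply (pow_nonzero S 2); [unfold S; nra | exact HS].
Qed.

Section FrenetHelix.

Variables (a b : R) (lo hi : Rbar) (g : R -> vec) (k t : R) (N B : R -> vec).
Hypothesis Hg : curve_in_M a lo hi g.
Hypothesis HNB : forall i, (i < 3)%nat -> forall s, inI lo hi s ->
  ex_derive (fun u => N u i) s /\ ex_derive (fun u => B u i) s.
Hypothesis Hframe : forall s, inI lo hi s ->
  let T := vel g s in
  ginner a b (g s) T T = 1 /\ ginner a b (g s) (N s) (N s) = 1 /\
  ginner a b (g s) (B s) (B s) = 1 /\ ginner a b (g s) T (N s) = 0 /\
  ginner a b (g s) T (B s) = 0 /\ ginner a b (g s) (N s) (B s) = 0 /\
  (forall l, (l < 3)%nat ->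
     covT a b g 1 s l = k * N s l /\
     covd a b g N s l = - k * vel g s l + t * B s l /\
     covd a b g B s l = - t * N s l).

Notation inJ := (inI lo hi).

Lemma N_derivable s : inJ s -> forall l, (l < 3)%nat -> ex_derive (fun u => N u l) s.
Proof. intros Hs l Hl. apply (HNB l Hl s Hs). Qed.

Lemma B_derivable s : inJ s -> forall l, (l < 3)%nat -> ex_derive (fun u => B u l) s.
Proof. intros Hs l Hl. apply (HNB l Hl s Hs). Qed.

Lemma T_derivable s : inJ s -> forall l, (l < 3)%nat -> ex_derive (fun u => vel g u l) s.
Proof. intros Hs l Hl. exact (curve_vel_derivable a lo hi g Hg l s Hl Hs). Qed.

Lemma frenet_T s : inJ s -> eq3 (covT a b g 1 s) (vlin k (N s) 0 (B s)).
Proof.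
intros Hs l Hl. destruct (Hframe s Hs) as (_&_&_&_&_&_&H).
unfold vlin. rewrite (proj1 (H l Hl)). ring.
Qed.

Lemma frenet_N s : inJ s -> eq3 (covd a b g N s) (vlin (- k) (vel g s) t (B s)).
Proof. intros Hs l Hl. destruct (Hframe s Hs) as (_&_&_&_&_&_&H). apply (H l Hl). Qed.

Lemma frenet_B s : inJ s -> eq3 (covd a b g B s) (vlin (- t) (N s) 0 (B s)).
Proof.
intros Hs l Hl. destruct (Hframe s Hs) as (_&_&_&_&_&_&H).
unfold vlin. rewrite (proj2 (proj2 (H l Hl))). ring.
Qed.

Lemma covT_succ n s al (X : R -> vec) be (Y : R -> vec) : inJ s ->
  (forall u, inJ u -> eq3 (covT a b g n u) (vlin al (X u) be (Y u))) ->
  (forall l, (l < 3)%nat -> ex_derive (fun u => X u l) s) ->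
  (forall l, (l < 3)%nat -> ex_derive (fun u => Y u l) s) ->
  eq3 (covT a b g (S n) s) (vlin al (covd a b g X s) be (covd a b g Y s)).
Proof.
intros Hs Hn HX HY. apply covd_vlin; [|exact HX|exact HY].
exact (filter_imp _ _ Hn (inI_locally lo hi s Hs)).
Qed.

Ltac frenet_step s Hs prev dX dY :=
  let l := fresh "l" in let Hl := fresh "Hl" in
  intros l Hl;
  rewrite (covT_succ _ _ _ _ _ _ Hs prev (dX s Hs) (dY s Hs) l Hl);
  unfold vlin; change (covd a b g (vel g) s) with (covT a b g 1 s);
  rewrite ?(frenet_T s Hs l Hl), ?(frenet_N s Hs l Hl), ?(frenet_B s Hs l Hl);
  unfold vlin; ring.

Lemma covT2 s : inJ s -> eq3 (covT a b g 2 s) (vlin (- k ^ 2) (vel g s) (k * t) (B s)).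
Proof. intros Hs. frenet_step s Hs frenet_T N_derivable B_derivable. Qed.

Lemma covT3 s : inJ s -> eq3 (covT a b g 3 s) (vlin (- k * (k ^ 2 + t ^ 2)) (N s) 0 (B s)).
Proof. intros Hs. frenet_step s Hs covT2 T_derivable B_derivable. Qed.

Lemma covT4 s : inJ s ->
  eq3 (covT a b g 4 s) (vlin (k ^ 2 * (k ^ 2 + t ^ 2)) (vel g s) (- k * t * (k ^ 2 + t ^ 2)) (B s)).
Proof. intros Hs. frenet_step s Hs covT3 N_derivable B_derivable. Qed.

Lemma covT5 s : inJ s -> eq3 (covT a b g 5 s) (vlin (k * (k ^ 2 + t ^ 2) ^ 2) (N s) 0 (B s)).
Proof. intros Hs. frenet_step s Hs covT4 T_derivable B_derivable. Qed.

Lemma frame_orthonormal s : inJ s ->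
  ginner a b (g s) (vel g s) (vel g s) = 1 /\ ginner a b (g s) (N s) (N s) = 1 /\
  ginner a b (g s) (B s) (B s) = 1 /\ ginner a b (g s) (vel g s) (N s) = 0 /\
  ginner a b (g s) (vel g s) (B s) = 0 /\ ginner a b (g s) (N s) (B s) = 0.
Proof. intros Hs. destruct (Hframe s Hs) as (H1&H2&H3&H4&H5&H6&_). tauto. Qed.

Ltac frame_values s Hs :=
  destruct (frame_orthonormal s Hs) as (gTT & gNN & gBB & gTN & gTB & gNB);
  assert (gNT := gTN); assert (gBT := gTB); assert (gBN := gNB);
  rewrite ginner_sym in gNT, gBT, gBN.

Hypothesis Htri : triharmonic a b lo hi g.

Lemma triharmonic_inner s W : inJ s ->
  ginner a b (g s) (covT a b g 5 s) W
  + bcv_curvature a b (g s) (covT a b g 3 s) (vel g s) (vel g s) W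
  - bcv_curvature a b (g s) (covT a b g 2 s) (covT a b g 1 s) (vel g s) W = 0.
Proof.
intros Hs. rewrite <- !ginner_Rcurv by exact (curve_lam_neq0 a lo hi g Hg s Hs).
transitivity (ginner a b (g s) (fun l => covT a b g 5 s l
    + Rcurv a b (g s) (covT a b g 3 s) (vel g s) (vel g s) l
    - Rcurv a b (g s) (covT a b g 2 s) (covT a b g 1 s) (vel g s) l) W).
{ unfold ginner, sum3. ring. }
rewrite (ginner_ext _ _ _ _ (fun _ => 0) W W (Htri s Hs) (eq3_refl W)).
unfold ginner, sum3. ring.
Qed.

Lemma triharmonic_helix_eqs s : inJ s ->
  let nu := eta a b (g s) (vel g s) in
  let n := eta a b (g s) (N s) in
  let be := eta a b (g s) (B s) in
  k * cB a b * n * ((2 * k ^ 2 + t ^ 2) * be + k * t * nu) = 0 /\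
  k * ((k ^ 2 + t ^ 2) ^ 2 - (2 * k ^ 2 + t ^ 2) * (cA a b - cB a b * (nu ^ 2 + n ^ 2))
       - k * t * cB a b * nu * be) = 0.
Proof.
intros Hs. cbv zeta.
assert (TW := triharmonic_inner s).
assert (Hexp : forall W, ginner a b (g s) (vlin (k * (k ^ 2 + t ^ 2) ^ 2) (N s) 0 (B s)) W
  + bcv_curvature a b (g s) (vlin (- k * (k ^ 2 + t ^ 2)) (N s) 0 (B s)) (vel g s) (vel g s) W
  - bcv_curvature a b (g s) (vlin (- k ^ 2) (vel g s) (k * t) (B s)) (vlin k (N s) 0 (B s))
      (vel g s) W = 0).
{ intros W. pose proof (TW W Hs) as E.
  rewrite (ginner_ext _ _ _ _ _ W W (covT5 s Hs) (eq3_refl W)) in E.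
  rewrite (bcv_curvature_ext _ _ _ _ _ _ _ _ _ W (covT3 s Hs) (eq3_refl _) (eq3_refl _)) in E.
  rewrite (bcv_curvature_ext _ _ _ _ _ _ _ _ _ W (covT2 s Hs) (frenet_T s Hs) (eq3_refl _)) in E.
  exact E. }
assert (EB := Hexp (B s)). assert (EN := Hexp (N s)).
unfold bcv_curvature in EB, EN.
rewrite ?ginner_vlin_l, ?ginner_vlin_r, ?eta_vlin in EB.
rewrite ?ginner_vlin_l, ?ginner_vlin_r, ?eta_vlin in EN.
frame_values s Hs.
rewrite ?gTT, ?gNN, ?gBB, ?gTN, ?gTB, ?gNB, ?gNT, ?gBT, ?gBN in EB.
rewrite ?gTT, ?gNN, ?gBB, ?gTN, ?gTB, ?gNB, ?gNT, ?gBT, ?gBN in EN.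
split; lra.
Qed.

Lemma frame_vertical s : inJ s ->
  let nu := eta a b (g s) (vel g s) in
  let n := eta a b (g s) (N s) in
  let be := eta a b (g s) (B s) in
  nu ^ 2 + n ^ 2 + be ^ 2 = 1 /\
  eta_twist a b (g s) (vel g s) (B s) ^ 2 = b ^ 2 / 4 * n ^ 2 /\
  eta_twist a b (g s) (vel g s) (N s) ^ 2 = b ^ 2 / 4 * be ^ 2.
Proof.
intros Hs. cbv zeta.
assert (HL := curve_lam_neq0 a lo hi g Hg s Hs).
destruct (frame_orthonormal s Hs) as (gTT & gNN & gBB & gTN & gTB & gNB).
rewrite ginner_coframe in gTT, gNN, gBB, gTN, gTB, gNB by exact HL.
destruct (orthonormal_vertical _ _ _ gTT gNN gBB gTN gTB gNB) as (H1 & H2 & H3).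
unfold eta_twist. cbn [coframe] in H1, H2, H3.
split; [exact H1|]. split; [rewrite <- H2 | rewrite <- H3]; field.
Qed.

Lemma eta_frame_derivs s : inJ s ->
  is_derive (fun u => eta a b (g u) (vel g u)) s (k * eta a b (g s) (N s)) /\
  is_derive (fun u => eta a b (g u) (N u)) s
    (- k * eta a b (g s) (vel g s) + t * eta a b (g s) (B s)
     + eta_twist a b (g s) (vel g s) (N s)) /\
  is_derive (fun u => eta a b (g u) (B u)) s
    (- t * eta a b (g s) (N s) + eta_twist a b (g s) (vel g s) (B s)).
Proof.
intros Hs.
assert (HL := curve_lam_neq0 a lo hi g Hg s Hs).
assert (Hx := curve_pos_derivable a lo hi g Hg 0 s ltac:(lia) Hs).
assert (Hy := curve_pos_derivable a lo hi g Hg 1 s ltac:(lia) Hs).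
split; [|split].
- assert (D := eta_deriv a b g (vel g) s HL Hx Hy (T_derivable s Hs)).
  change (covd a b g (vel g) s) with (covT a b g 1 s) in D.
  rewrite (eta_ext _ _ _ _ _ (frenet_T s Hs)), eta_vlin, eta_twist_self in D.
  rewrite Rmult_0_l, !Rplus_0_r in D. exact D.
- assert (D := eta_deriv a b g N s HL Hx Hy (N_derivable s Hs)).
  rewrite (eta_ext _ _ _ _ _ (frenet_N s Hs)), eta_vlin in D. exact D.
- assert (D := eta_deriv a b g B s HL Hx Hy (B_derivable s Hs)).
  rewrite (eta_ext _ _ _ _ _ (frenet_B s Hs)), eta_vlin, Rmult_0_l, Rplus_0_r in D. exact D.
Qed.

Hypothesis Hab : 4 * a <> b ^ 2.
Hypothesis Hk : 0 < k.

Lemma binormal_balance s : inJ s -> eta a b (g s) (N s) <> 0 ->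
  (2 * k ^ 2 + t ^ 2) * eta a b (g s) (B s) + k * t * eta a b (g s) (vel g s) = 0.
Proof.
intros Hs Hn. destruct (triharmonic_helix_eqs s Hs) as [EB _].
apply (Rmult_eq_reg_l (k * cB a b * eta a b (g s) (N s))); [rewrite Rmult_0_r; exact EB|].
repeat apply Rmult_integral_contrapositive_currified; [lra | unfold cB; lra | exact Hn].
Qed.

(* Where [eta N <> 0] the balance relation holds on a neighbourhood, so its derivative
   vanishes too. *)
Lemma eta_N_zero s : inJ s -> eta a b (g s) (N s) = 0.
Proof.
intros Hs. destruct (Req_dec (eta a b (g s) (N s)) 0) as [E | Hn]; [exact E | exfalso].
destruct (eta_frame_derivs s Hs) as (DT & DN & DB).
assert (Hbal : locally s (fun u =>
  (2 * k ^ 2 + t ^ 2) * eta a b (g u) (B u) + k * t * eta a b (g u) (vel g u) = 0)).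
{ apply (filter_imp (fun u => inJ u /\ eta a b (g u) (N u) <> 0)).
  - intros u [Hu Hnu]. exact (binormal_balance u Hu Hnu).
  - apply filter_and; [exact (inI_locally lo hi s Hs)|].
    apply locally_nonzero; [|exact Hn].
    apply (ex_derive_continuous (V := R_NormedModule)). eexists. exact DN. }
assert (Dbal := is_derive_0_locally _ _ _ Hbal
  (is_derive_plus _ _ _ _ _ (is_derive_scal _ _ (2 * k ^ 2 + t ^ 2) _ DB)
                            (is_derive_scal _ _ (k * t) _ DT))).
destruct (frame_vertical s Hs) as (Hsum & HX2 & _).
destruct (triharmonic_helix_eqs s Hs) as [_ EN].
apply (helix_vertical_contradiction k t (cA a b) (cB a b) _ _ _ _ b Hk)
  with (2 := Hsum) (4 := binormal_balance s Hs Hn) (7 := HX2).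
- unfold cA, cB. field.
- exact Hn.
- apply (Rmult_eq_reg_l k); lra.
- cbv [plus scal mult] in Dbal; simpl in Dbal. lra.
Qed.

Lemma eta_T_const s1 s2 : inJ s1 -> inJ s2 ->
  eta a b (g s2) (vel g s2) = eta a b (g s1) (vel g s1).
Proof.
apply (is_derive_0_const_on lo hi (fun u => eta a b (g u) (vel g u))).
intros s Hs. rewrite <- (Rmult_0_r k), <- (eta_N_zero s Hs). apply eta_frame_derivs, Hs.
Qed.

Lemma eta_T_sq_lt_1 s : inJ s -> eta a b (g s) (vel g s) ^ 2 < 1.
Proof.
intros Hs. destruct (frame_vertical s Hs) as (Hsum & _ & HX2).
rewrite (eta_N_zero s Hs) in Hsum.
destruct (Rle_lt_or_eq_dec (eta a b (g s) (vel g s) ^ 2) 1 ltac:(nra)) as [Hlt | Heq];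
  [exact Hlt | exfalso].
assert (Hbe : eta a b (g s) (B s) = 0) by nra.
rewrite Hbe in HX2.
assert (Htw : eta_twist a b (g s) (vel g s) (N s) = 0) by nra.
destruct (eta_frame_derivs s Hs) as (_ & DN & _).
assert (Z := is_derive_0_locally _ _ _
  (filter_imp _ _ eta_N_zero (inI_locally lo hi s Hs)) DN).
rewrite Hbe, Htw in Z.
assert (eta a b (g s) (vel g s) = 0) by (apply (Rmult_eq_reg_l k); lra).
nra.
Qed.

Lemma helix_hopf_data s0 : inJ s0 -> forall s, inJ s ->
  ginner a b (g s) (vel g s) (vel g s) = 1 /\
  eta a b (g s) (vel g s) = eta a b (g s0) (vel g s0) /\
  ginner a b (g s) (covT a b g 1 s) (vel g s) = 0 /\ eta a b (g s) (covT a b g 1 s) = 0.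
Proof.
intros Hs0 s Hs. destruct (frame_orthonormal s Hs) as (HTT & _ & _ & HTN & _).
rewrite (ginner_ext _ _ _ _ _ _ _ (frenet_T s Hs) (eq3_refl _)),
  (eta_ext _ _ _ _ _ (frenet_T s Hs)).
rewrite ginner_vlin_l, eta_vlin, (ginner_sym _ _ _ (N s)), HTN, (eta_N_zero s Hs).
split; [exact HTT|]. split; [exact (eta_T_const s0 s Hs0 Hs) | split; ring].
Qed.

End FrenetHelix.

Lemma inI_scale (w : posreal) lo hi u :
  inI (Rbar_mult_pos lo w) (Rbar_mult_pos hi w) u <-> inI lo hi (/ w * u).
Proof.
assert (Hu : Finite u = Rbar_mult_pos (/ w * u) w)
  by (simpl; f_equal; field; apply Rgt_not_eq, cond_pos).
unfold inI. rewrite Hu, <- !Rbar_mult_pos_lt. reflexivity.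
Qed.

Lemma smooth_on_derive_n P f : smooth_on P f -> forall n s, P s -> ex_derive_n f n s.
Proof. intros H [|n] s Hs; [exact I | exact (H n s Hs)]. Qed.

Lemma smooth_on_scale (w : posreal) lo hi f : smooth_on (inI lo hi) f ->
  smooth_on (inI (Rbar_mult_pos lo w) (Rbar_mult_pos hi w)) (fun u => f (/ w * u)).
Proof.
intros H n u Hu. apply inI_scale in Hu.
apply (ex_derive_n_comp_scal f (/ w) (S n) u).
apply (filter_imp _ _ (fun y Hy k _ => smooth_on_derive_n _ f H k y Hy)).
exact (inI_locally lo hi _ Hu).
Qed.

Lemma smooth_on_add_linear lo hi f d : smooth_on (inI lo hi) f ->
  smooth_on (inI lo hi) (fun s => f s + d * s).
Proof.
intros H n s Hs.
apply (ex_derive_n_plus f (fun s => d * s) (S n)).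
- apply (filter_imp _ _ (fun y Hy k _ => smooth_on_derive_n _ f H k y Hy)).
  exact (inI_locally lo hi s Hs).
- apply filter_forall. intros y k _. apply ex_derive_n_scal_l.
  apply (ex_derive_n_ext (fun x => x ^ 1)); [intros; ring | apply ex_derive_n_pow].
Qed.

Lemma Derive_comp_scale (f : R -> R) w u : ex_derive f (w * u) ->
  Derive (fun u => f (w * u)) u = w * Derive f (w * u).
Proof.
intros H. rewrite (Derive_comp f (fun u => w * u)) by (auto_derive; auto).
f_equal. apply is_derive_unique. auto_derive; [exact I | ring].
Qed.

(* [alpha(u) = psi_{-c s} (g s)] with [s = u / w]: for [w = sqrt (1 - c^2)] its velocity
   [(T - c E3) / w] is a unit vector orthogonal to [E3]. *)
Definition hopf_profile (g : R -> vec) (c w u : R) : vec :=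
  psi (- c * (/ w * u)) (g (/ w * u)).

Lemma vel_hopf_profile a lo hi g c w u : curve_in_M a lo hi g -> inI lo hi (/ w * u) ->
  eq3 (vel (hopf_profile g c w) u) (vlin (/ w) (vel g (/ w * u)) (- (c / w)) E3).
Proof.
intros Hg Hu l Hl. unfold vel, vlin, hopf_profile, psi, E3.
destruct l as [|[|[|l]]]; try lia; cbn [Nat.eqb].
- rewrite (Derive_comp_scale (fun s => g s 0%nat)); [unfold Rdiv; ring|].
  exact (curve_pos_derivable a lo hi g Hg 0 _ ltac:(lia) Hu).
- rewrite (Derive_comp_scale (fun s => g s 1%nat)); [unfold Rdiv; ring|].
  exact (curve_pos_derivable a lo hi g Hg 1 _ ltac:(lia) Hu).
- set (z := fun s => g s 2%nat).
  assert (Dz : ex_derive z (/ w * u))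
    by exact (curve_pos_derivable a lo hi g Hg 2 _ ltac:(lia) Hu).
  change (fun t => g (/ w * t) 2%nat + - c * (/ w * t))
    with (fun t => (fun s => z s + - c * s) (/ w * t)).
  rewrite Derive_comp_scale.
  + rewrite (is_derive_unique _ _ (Derive z (/ w * u) - c)).
    * unfold Rdiv. ring.
    * auto_derive; [exact Dz | change (fun x : R => z x) with z; ring].
  + auto_derive. exact Dz.
Qed.

Lemma ginner_E3_E3 a b p : ginner a b p E3 E3 = 1.
Proof.
unfold ginner, sum3, gmet, E3, kdelta2, theta; cbn [Nat.eqb andb Nat.ltb Nat.leb].
unfold Rdiv. ring.
Qed.

Lemma geodesic_of_hopf_cylinder_of_const_eta a b lo hi g c :
  curve_in_M a lo hi g -> c ^ 2 < 1 ->
  (forall s, inI lo hi s ->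
     ginner a b (g s) (vel g s) (vel g s) = 1 /\ eta a b (g s) (vel g s) = c /\
     ginner a b (g s) (covT a b g 1 s) (vel g s) = 0 /\ eta a b (g s) (covT a b g 1 s) = 0) ->
  geodesic_of_hopf_cylinder a b lo hi g.
Proof.
intros Hg Hc Hcurve.
set (w := mkposreal (sqrt (1 - c ^ 2)) (sqrt_lt_R0 (1 - c ^ 2) ltac:(lra))).
assert (Hw : (w : R) <> 0) by apply Rgt_not_eq, cond_pos.
assert (Hw2 : (w : R) ^ 2 = 1 - c ^ 2) by (rewrite <- Rsqr_pow2; apply Rsqr_sqrt; lra).
assert (Hg' := Hg). destruct Hg' as (Hlh & Hsm & HM).
exists (Rbar_mult_pos lo w), (Rbar_mult_pos hi w), (hopf_profile g c w),
  (fun s => w * s), (fun s => c * s).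
split; [|split; [|split]].
- split; [apply Rbar_mult_pos_lt, Hlh|]. split.
  + intros i Hi. destruct i as [|[|[|i]]]; try lia.
    * exact (smooth_on_scale w lo hi _ (Hsm 0%nat ltac:(lia))).
    * exact (smooth_on_scale w lo hi _ (Hsm 1%nat ltac:(lia))).
    * exact (smooth_on_scale w lo hi _
               (smooth_on_add_linear lo hi _ (- c) (Hsm 2%nat ltac:(lia)))).
  + intros u Hu. apply inI_scale in Hu. exact (HM _ Hu).
- intros u Hu. apply inI_scale in Hu.
  destruct (Hcurve _ Hu) as (HTT & HTE & _).
  rewrite (ginner_ext _ _ _ _ _ _ _ (vel_hopf_profile a lo hi g c w u Hg Hu)
    (vel_hopf_profile a lo hi g c w u Hg Hu)).
  change (ginner a b (hopf_profile g c w u)) with (ginner a b (g (/ w * u))).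
  rewrite ginner_vlin_l, !ginner_vlin_r, ginner_E3_E3, HTT, (ginner_sym _ _ _ E3).
  unfold eta in HTE. rewrite HTE. field_simplify; [|exact Hw]. rewrite Hw2. field. lra.
- intros u Hu. apply inI_scale in Hu.
  destruct (Hcurve _ Hu) as (_ & HTE & _).
  rewrite (ginner_ext _ _ _ _ _ E3 E3 (vel_hopf_profile a lo hi g c w u Hg Hu) (eq3_refl E3)).
  change (ginner a b (hopf_profile g c w u)) with (ginner a b (g (/ w * u))).
  rewrite ginner_vlin_l, ginner_E3_E3. unfold eta in HTE. rewrite HTE. field. exact Hw.
- intros s Hs.
  assert (Hws : / w * (w * s) = s) by (field; exact Hw).
  assert (Hs' : inI lo hi (/ w * (w * s))) by (rewrite Hws; exact Hs).
  destruct (Hcurve _ Hs) as (_ & _ & HaT & HaE).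
  split; [apply inI_scale; exact Hs'|].
  split; [auto_derive; exact I|].
  split; [auto_derive; exact I|].
  split; [|split].
  + intros i Hi. unfold hopf_profile, psi. rewrite Hws.
    destruct (Nat.eqb i 2); ring.
  + rewrite (ginner_ext _ _ _ _ _ _ _ (eq3_refl _) (vel_hopf_profile a lo hi g c w _ Hg Hs')).
    rewrite ginner_vlin_r, Hws, HaT. unfold eta in HaE. rewrite HaE. ring.
  + exact HaE.
Qed.

Theorem corollary4p8 (a b : R) (lo hi : Rbar) (gamma : R -> vec) (kappa tau : R) :
  4 * a <> b ^ 2 ->
  curve_in_M a lo hi gamma ->
  arclength a b lo hi gamma ->
  triharmonic a b lo hi gamma ->
  frenet_helix a b lo hi gamma kappa tau ->
  tau <> 0 ->
  geodesic_of_hopf_cylinder a b lo hi gamma.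
Proof.
(* Arc length is already part of the Frenet frame, and [eta_N_zero] needs no assumption
   on the torsion. *)
intros Hab Hg _ Htri [Hk [N [B [HNB Hframe]]]] _.
destruct (inI_nonempty lo hi (proj1 Hg)) as [s0 Hs0].
apply (geodesic_of_hopf_cylinder_of_const_eta a b lo hi gamma
         (eta a b (gamma s0) (vel gamma s0)) Hg).
- exact (eta_T_sq_lt_1 a b lo hi gamma kappa tau N B Hg HNB Hframe Htri Hab Hk s0 Hs0).
- exact (helix_hopf_data a b lo hi gamma kappa tau N B Hg HNB Hframe Htri Hab Hk s0 Hs0).
Qed.
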